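(* Let $I_2^P\subset\mathbb C[d,\bar k,l,r,\bar t,\bar x]$ be the ideal generated by $b^P=\sum_{i=1}^3(P_0x_i-P_i)^2-d^2P_0^2$, $\nu_{(i,j)}^P=n_i(P_0x_j-P_j)-n_j(P_0x_i-P_i)$ for $1\le i<j\le3$, $w^P=rP_0\beta h-1$, and $\ell_i=x_i-k_il$ for $i=1,2,3$. Then $s_0,s_1,s_2,s_3\in I_2^P\cap\mathbb C[d,\bar k,\bar t]$. Consequently, if $(l^o,r^o,\bar t^o,\bar x^o)$ is a solution of these eight equations with $(d,\bar k)=(d^o,\bar k^o)$, then $s_1=s_2=s_3=0$ at $(d^o,\bar k^o,\bar t^o)$.
   Context: $P=(P_1/P_0,P_2/P_0,P_3/P_0)$ with $P_i\in\mathbb C[t_1,t_2]$, $\gcd(P_0,\dots,P_3)=1$, is a rational parametrization of a surface $\Sigma$ defined by an irreducible $f\in\mathbb C[y_1,y_2,y_3]$. $n_i=A_i/\gcd(A_1,A_2,A_3)$ where $\frac{\partial P}{\partial t_1}\wedge\frac{\partial P}{\partial t_2}=(A_1,A_2,A_3)/A_0$ (cross product); $h=n_1^2+n_2^2+n_3^2$; $\beta\in\mathbb C[\bar t]$ is a nonzero polynomial with $\gcd(\beta,P_0)=1$ and $f_i(P)=\beta P_0^{-\mu}n_i$ for some $\mu\in\mathbb N$. $\bar k=(k_1,k_2,k_3)$, $d,l,r$ are variables. $s_0=k_1(P_2n_3-P_3n_2)-k_2(P_1n_3-P_3n_1)+k_3(P_1n_2-P_2n_1)$; $s_1=h(k_2P_3-k_3P_2)^2-d^2P_0^2(k_2n_3-k_3n_2)^2$;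 $s_2=h(k_1P_3-k_3P_1)^2-d^2P_0^2(k_1n_3-k_3n_1)^2$; $s_3=h(k_1P_2-k_2P_1)^2-d^2P_0^2(k_1n_2-k_2n_1)^2$. *)

From HB Require Import structures.
From mathcomp Require Import all_boot all_order all_algebra all_field.
Set Implicit Arguments. Unset Strict Implicit. Unset Printing Implicit Defensive.
Import Order.TTheory GRing.Theory Num.Theory.
Local Open Scope ring_scope.

Definition rdvd {R : comNzRingType} (a b : R) : Prop := exists c : R, b = a * c.

Definition gcd_one {R : comUnitRingType} (s : seq R) : Prop :=
  forall q : R, (forall a, a \in s -> rdvd q a) -> q \is a GRing.unit.

Definition irreducible_elt {R : comUnitRingType} (f : R) : Prop :=
  [/\ f != 0, f \isn't a GRing.unit &
      forall a b : R, f = a * b -> a \is a GRing.unit \/ b \is a GRing.unit].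

Definition in_ideal {R : comNzRingType} (gs : seq R) (s : R) : Prop :=
  exists cs : 'I_(size gs) -> R, s = \sum_(i < size gs) cs i * gs`_i.

(* ---------- C[t1,t2] : t1 inner variable, t2 outer variable ---------- *)
Notation Ct := {poly {poly algC}}.
Definition dt1 (p : Ct) : Ct := map_poly (@deriv algC) p.
Definition dt2 (p : Ct) : Ct := deriv p.
Definition evT (p : Ct) (t1 t2 : algC) : algC :=
  (map_poly (fun q : {poly algC} => q.[t1]) p).[t2].

(* C[y1,y2,y3] : y1 innermost, y3 outermost *)
Notation Cy := {poly {poly {poly algC}}}.
Definition dy1 (f : Cy) : Cy := map_poly (map_poly (@deriv algC)) f.
Definition dy2 (f : Cy) : Cy := map_poly (@deriv {poly algC}) f.
Definition dy3 (f : Cy) : Cy := deriv f.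

Notation Ft := {fraction Ct}.
Definition toF (p : Ct) : Ft := FracField.tofrac p.
Definition embC (c : algC) : Ft := toF (c%:P%:P).
Definition evY (f : Cy) (a b c : Ft) : Ft :=
  (map_poly (fun q2 : {poly {poly algC}} =>
     (map_poly (fun q1 : {poly algC} => (map_poly embC q1).[a]) q2).[b]) f).[c].

(* Numerators A_1,A_2,A_3 of dP/dt1 x dP/dt2 = (A_1,A_2,A_3)/A_0 with A_0 = P0^4,
   where P = (P1/P0,P2/P0,P3/P0) and d(Pi/P0)/dtj = Dj Pi / P0^2 *)
Definition Dnum (dt : Ct -> Ct) (P0 Pi : Ct) : Ct := P0 * dt Pi - Pi * dt P0.
Definition A1 (P0 P1 P2 P3 : Ct) : Ct :=
  Dnum dt1 P0 P2 * Dnum dt2 P0 P3 - Dnum dt1 P0 P3 * Dnum dt2 P0 P2.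
Definition A2 (P0 P1 P2 P3 : Ct) : Ct :=
  Dnum dt1 P0 P3 * Dnum dt2 P0 P1 - Dnum dt1 P0 P1 * Dnum dt2 P0 P3.
Definition A3 (P0 P1 P2 P3 : Ct) : Ct :=
  Dnum dt1 P0 P1 * Dnum dt2 P0 P2 - Dnum dt1 P0 P2 * Dnum dt2 P0 P1.

(* ---------- the polynomials of the statement, written over any comm. ring ----
   arguments: values of P0..P3, n1..n3, beta (polynomials in t) and of the
   variables d, k1,k2,k3, l, r, x1,x2,x3 *)
Section Gens.
Variable R : comNzRingType.
Variables (P0 P1 P2 P3 n1 n2 n3 beta : R).
Variables (d k1 k2 k3 l r x1 x2 x3 : R).

Definition hh : R := n1 ^+ 2 + n2 ^+ 2 + n3 ^+ 2.
Definition bP : R :=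
  (P0 * x1 - P1) ^+ 2 + (P0 * x2 - P2) ^+ 2 + (P0 * x3 - P3) ^+ 2 - d ^+ 2 * P0 ^+ 2.
Definition nu12 : R := n1 * (P0 * x2 - P2) - n2 * (P0 * x1 - P1).
Definition nu13 : R := n1 * (P0 * x3 - P3) - n3 * (P0 * x1 - P1).
Definition nu23 : R := n2 * (P0 * x3 - P3) - n3 * (P0 * x2 - P2).
Definition wP : R := r * P0 * beta * hh - 1.
Definition ell1 : R := x1 - k1 * l.
Definition ell2 : R := x2 - k2 * l.
Definition ell3 : R := x3 - k3 * l.
Definition gensI2 : seq R := [:: bP; nu12; nu13; nu23; wP; ell1; ell2; ell3].

Definition s0 : R :=
  k1 * (P2 * n3 - P3 * n2) - k2 * (P1 * n3 - P3 * n1) + k3 * (P1 * n2 - P2 * n1).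
Definition s1 : R :=
  hh * (k2 * P3 - k3 * P2) ^+ 2 - d ^+ 2 * P0 ^+ 2 * (k2 * n3 - k3 * n2) ^+ 2.
Definition s2 : R :=
  hh * (k1 * P3 - k3 * P1) ^+ 2 - d ^+ 2 * P0 ^+ 2 * (k1 * n3 - k3 * n1) ^+ 2.
Definition s3 : R :=
  hh * (k1 * P2 - k2 * P1) ^+ 2 - d ^+ 2 * P0 ^+ 2 * (k1 * n2 - k2 * n1) ^+ 2.
End Gens.

(* ---------- the big ring C[d,k1,k2,k3,l,r,t1,t2,x1,x2,x3] ----------
   realised as iterated univariate polynomial rings over C[t1,t2] = Ct, with
   the variables (inner to outer) d, k1, k2, k3, l, r, x1, x2, x3 *)
Definition Rd  : idomainType := {poly Ct}.
Definition Rk1 : idomainType := {poly Rd}.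
Definition Rk2 : idomainType := {poly Rk1}.
Definition Rk3 : idomainType := {poly Rk2}.
Definition Rl  : idomainType := {poly Rk3}.
Definition Rr  : idomainType := {poly Rl}.
Definition Rx1 : idomainType := {poly Rr}.
Definition Rx2 : idomainType := {poly Rx1}.
Definition Big : idomainType := {poly Rx2}.

Definition liftT (p : Ct) : Big :=
  ((((((((p%:P : Rd)%:P : Rk1)%:P : Rk2)%:P : Rk3)%:P : Rl)%:P : Rr)%:P
     : Rx1)%:P : Rx2)%:P.
Definition Xd  : Big :=
  (((((((('X : Rd)%:P : Rk1)%:P : Rk2)%:P : Rk3)%:P : Rl)%:P : Rr)%:P
     : Rx1)%:P : Rx2)%:P.
Definition Xk1 : Big :=
  ((((((('X : Rk1)%:P : Rk2)%:P : Rk3)%:P : Rl)%:P : Rr)%:P : Rx1)%:P : Rx2)%:P.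
Definition Xk2 : Big :=
  (((((('X : Rk2)%:P : Rk3)%:P : Rl)%:P : Rr)%:P : Rx1)%:P : Rx2)%:P.
Definition Xk3 : Big := ((((('X : Rk3)%:P : Rl)%:P : Rr)%:P : Rx1)%:P : Rx2)%:P.
Definition Xl  : Big := (((('X : Rl)%:P : Rr)%:P : Rx1)%:P : Rx2)%:P.
Definition Xr  : Big := ((('X : Rr)%:P : Rx1)%:P : Rx2)%:P.
Definition Xx1 : Big := (('X : Rx1)%:P : Rx2)%:P.
Definition Xx2 : Big := ('X : Rx2)%:P.
Definition Xx3 : Big := 'X.

From HB Require Import structures.
From mathcomp Require Import all_boot all_order all_algebra all_field.
From mathcomp Require Import ring.
Set Implicit Arguments. Unset Strict Implicit. Unset Printing Implicit Defensive.
Import Order.TTheory GRing.Theory Num.Theory.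
Local Open Scope ring_scope.

(* Write u = P0 x - P.  The [nu]'s say that u is parallel to n, and [wP] makes
   h invertible with inverse rho = r P0 beta, so u = rho (n . u) n modulo the
   ideal; hence |u|^2 = rho (n . u)^2, which [bP] identifies with d^2 P0^2.
   The [ell]'s turn k2 u3 - k3 u2 into -(k2 P3 - k3 P2), which is therefore
   rho (n . u) (k2 n3 - k3 n2); squaring and multiplying by h gives s1.  The
   generators are permuted (up to sign) by rotating the coordinates, and the
   rotation carries s1 to s3 and s2.  For s0, k . (P x n) vanishes because
   P = P0 k l - u with u parallel to n. *)

Section IdealMembership.
Variable R : comNzRingType.
Implicit Types (gs hs : seq R) (s t : R).

Lemma in_ideal8 (g0 g1 g2 g3 g4 g5 g6 g7 c0 c1 c2 c3 c4 c5 c6 c7 s : R) :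
  s = c0 * g0 + c1 * g1 + c2 * g2 + c3 * g3 + c4 * g4 + c5 * g5 + c6 * g6
      + c7 * g7 ->
  in_ideal [:: g0; g1; g2; g3; g4; g5; g6; g7] s.
Proof.
move=> ->; exists (fun i => [:: c0; c1; c2; c3; c4; c5; c6; c7]`_i).
rewrite /= !big_ord_recl big_ord0 /=; ring.
Qed.

Lemma in_ideal0 gs : in_ideal gs 0.
Proof. by exists (fun => 0); rewrite big1 // => i _; rewrite mul0r. Qed.

Lemma in_idealD gs s t : in_ideal gs s -> in_ideal gs t -> in_ideal gs (s + t).
Proof.
move=> [cs ->] [ds ->]; exists (fun i => cs i + ds i).
by rewrite -big_split; apply: eq_bigr => i _; rewrite mulrDl.
Qed.

Lemma in_idealMl gs c s : in_ideal gs s -> in_ideal gs (c * s).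
Proof.
move=> [cs ->]; exists (fun i => c * cs i).
by rewrite mulr_sumr; apply: eq_bigr => i _; rewrite mulrA.
Qed.

Lemma in_ideal_gen gs (j : nat) c s :
  (j < size gs)%N -> s = c * gs`_j -> in_ideal gs s.
Proof.
move=> lt_j_gs ->; apply: in_idealMl.
exists (fun i => (i == Ordinal lt_j_gs)%:R).
rewrite (bigD1 (Ordinal lt_j_gs)) //= eqxx mul1r big1 ?addr0 // => i /negbTE ->.
by rewrite mul0r.
Qed.

Lemma in_ideal_trans gs hs s :
  (forall i : 'I_(size gs), in_ideal hs gs`_i) -> in_ideal gs s -> in_ideal hs s.
Proof.
move=> gs_hs [cs ->]; apply: (big_ind (in_ideal hs)) => //.
- exact: in_ideal0.
- exact: in_idealD.
- by move=> i _; apply: in_idealMl.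
Qed.

Lemma in_ideal_common_zero gs s :
  in_ideal gs s -> all (fun g => g == 0) gs -> s = 0.
Proof.
move=> [cs ->] /allP gs0; apply: big1 => i _.
by rewrite (eqP (gs0 _ (mem_nth 0 (ltn_ord i)))) mulr0.
Qed.

End IdealMembership.

Section Certificates.
Variable R : comNzRingType.
Variables (P0 P1 P2 P3 n1 n2 n3 beta d k1 k2 k3 l r x1 x2 x3 : R).

Local Notation I2 := (gensI2 P0 P1 P2 P3 n1 n2 n3 beta d k1 k2 k3 l r x1 x2 x3).
Local Notation I2rot :=
  (gensI2 P0 P3 P1 P2 n3 n1 n2 beta d k3 k1 k2 l r x3 x1 x2).

Lemma s0_in_I2 : in_ideal I2 (s0 P1 P2 P3 n1 n2 n3 k1 k2 k3).
Proof.
apply: (in_ideal8 (c0 := 0) (c1 := k3) (c2 := - k2) (c3 := k1) (c4 := 0)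
  (c5 := P0 * (k3 * n2 - k2 * n3)) (c6 := P0 * (k1 * n3 - k3 * n1))
  (c7 := P0 * (k2 * n1 - k1 * n2))).
rewrite /s0 /bP /nu12 /nu13 /nu23 /wP /ell1 /ell2 /ell3; ring.
Qed.

Lemma s1_in_I2 : in_ideal I2 (s1 P0 P2 P3 n1 n2 n3 d k2 k3).
Proof.
pose u1 := P0 * x1 - P1; pose u2 := P0 * x2 - P2; pose u3 := P0 * x3 - P3.
pose h := hh n1 n2 n3; pose rho := r * P0 * beta.
pose lam := rho * (n1 * u1 + n2 * u2 + n3 * u3).
pose c := k2 * n3 - k3 * n2.
pose m := k2 * u3 - k3 * u2.
pose E := P0 * (k2 * (x3 - k3 * l) - k3 * (x2 - k2 * l)).
pose N2 := n1 * (n1 * u2 - n2 * u1) - n3 * (n2 * u3 - n3 * u2).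
pose N3 := n1 * (n1 * u3 - n3 * u1) + n2 * (n2 * u3 - n3 * u2).
pose Z := h * (2 * lam * c + rho * (k2 * N3 - k3 * N2) - (rho * h - 1) * m).
pose a1 := - rho * c ^+ 2 * (u1 + lam * n1).
pose a2 := - rho * c ^+ 2 * (u2 + lam * n2) - rho * k3 * Z.
pose a3 := - rho * c ^+ 2 * (u3 + lam * n3) + rho * k2 * Z.
apply: (in_ideal8 (c0 := c ^+ 2) (c1 := n1 * a2 - n2 * a1)
  (c2 := n1 * a3 - n3 * a1) (c3 := n2 * a3 - n3 * a2)
  (c4 := c ^+ 2 * (u1 * (u1 + lam * n1) + u2 * (u2 + lam * n2)
                   + u3 * (u3 + lam * n3)) - m * Z)
  (c5 := 0) (c6 := - P0 * k3 * h * (E - 2 * m))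
  (c7 := P0 * k2 * h * (E - 2 * m))).
rewrite /a1 /a2 /a3 /Z /N2 /N3 /E /m /c /lam /rho /h /u1 /u2 /u3.
rewrite /s1 /bP /nu12 /nu13 /nu23 /wP /hh /ell1 /ell2 /ell3; ring.
Qed.

Lemma I2rot_sub_I2 (i : 'I_(size I2rot)) : in_ideal I2 I2rot`_i.
Proof.
case: i => -[|[|[|[|[|[|[|[|//]]]]]]]] /= lt_i;
  [ apply: (@in_ideal_gen _ _ 0 1) | apply: (@in_ideal_gen _ _ 2 (-1))
  | apply: (@in_ideal_gen _ _ 3 (-1)) | apply: (@in_ideal_gen _ _ 1 1)
  | apply: (@in_ideal_gen _ _ 4 1) | apply: (@in_ideal_gen _ _ 7 1)
  | apply: (@in_ideal_gen _ _ 5 1) | apply: (@in_ideal_gen _ _ 6 1) ] => //=;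
  rewrite /bP /nu12 /nu13 /nu23 /wP /hh /ell1 /ell2 /ell3; ring.
Qed.

Lemma in_ideal_I2rot s : in_ideal I2rot s -> in_ideal I2 s.
Proof. exact: in_ideal_trans I2rot_sub_I2. Qed.

End Certificates.

Lemma s3_in_I2 (R : comNzRingType)
    (P0 P1 P2 P3 n1 n2 n3 beta d k1 k2 k3 l r x1 x2 x3 : R) :
  in_ideal (gensI2 P0 P1 P2 P3 n1 n2 n3 beta d k1 k2 k3 l r x1 x2 x3)
    (s3 P0 P1 P2 n1 n2 n3 d k1 k2).
Proof.
apply: in_ideal_I2rot.
have -> : s3 P0 P1 P2 n1 n2 n3 d k1 k2 = s1 P0 P1 P2 n3 n1 n2 d k1 k2.
  by rewrite /s1 /s3 /hh; ring.
exact: s1_in_I2.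
Qed.

Lemma s2_in_I2 (R : comNzRingType)
    (P0 P1 P2 P3 n1 n2 n3 beta d k1 k2 k3 l r x1 x2 x3 : R) :
  in_ideal (gensI2 P0 P1 P2 P3 n1 n2 n3 beta d k1 k2 k3 l r x1 x2 x3)
    (s2 P0 P1 P3 n1 n2 n3 d k1 k3).
Proof.
do 2 apply: in_ideal_I2rot.
have -> : s2 P0 P1 P3 n1 n2 n3 d k1 k3 = s1 P0 P3 P1 n2 n3 n1 d k3 k1.
  by rewrite /s1 /s2 /hh; ring.
exact: s1_in_I2.
Qed.

Theorem mainTheorem14
  (P0 P1 P2 P3 : Ct) (f : Cy) (n1 n2 n3 beta : Ct)
  (* P = (P1/P0,P2/P0,P3/P0), gcd(P0,..,P3) = 1 *)
  (hP0 : P0 != 0) (hgcdP : gcd_one [:: P0; P1; P2; P3])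
  (* f irreducible, Sigma = V(f) is parametrized by P: f(P) = 0 and P has
     generic rank 2 (the normal vector dP/dt1 x dP/dt2 is not identically 0) *)
  (hf : irreducible_elt f)
  (hfP : evY f (toF P1 / toF P0) (toF P2 / toF P0) (toF P3 / toF P0) = 0)
  (hA : (A1 P0 P1 P2 P3, A2 P0 P1 P2 P3, A3 P0 P1 P2 P3) != (0, 0, 0))
  (* n_i = A_i / gcd(A_1,A_2,A_3) *)
  (hn : exists g : Ct, [/\ A1 P0 P1 P2 P3 = g * n1, A2 P0 P1 P2 P3 = g * n2
                          & A3 P0 P1 P2 P3 = g * n3])
  (hngcd : gcd_one [:: n1; n2; n3])
  (* beta nonzero, gcd(beta,P0) = 1, f_i(P) = beta P0^(-mu) n_i *)
  (hbeta : beta != 0) (hgcdb : gcd_one [:: beta; P0])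
  (hfi : exists mu : nat,
     let Q1 := toF P1 / toF P0 in let Q2 := toF P2 / toF P0 in
     let Q3 := toF P3 / toF P0 in
     [/\ evY (dy1 f) Q1 Q2 Q3 = toF beta / toF P0 ^+ mu * toF n1,
         evY (dy2 f) Q1 Q2 Q3 = toF beta / toF P0 ^+ mu * toF n2
       & evY (dy3 f) Q1 Q2 Q3 = toF beta / toF P0 ^+ mu * toF n3]) :
  (* s_0,..,s_3 lie in I_2^P (they involve only d, k, t, so this is membership
     in I_2^P ∩ C[d,k,t]) *)
  (let G := gensI2 (liftT P0) (liftT P1) (liftT P2) (liftT P3)
                   (liftT n1) (liftT n2) (liftT n3) (liftT beta)
                   Xd Xk1 Xk2 Xk3 Xl Xr Xx1 Xx2 Xx3 in
   [/\ in_ideal G (s0 (liftT P1) (liftT P2) (liftT P3)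
                      (liftT n1) (liftT n2) (liftT n3) Xk1 Xk2 Xk3),
       in_ideal G (s1 (liftT P0) (liftT P2) (liftT P3)
                      (liftT n1) (liftT n2) (liftT n3) Xd Xk2 Xk3),
       in_ideal G (s2 (liftT P0) (liftT P1) (liftT P3)
                      (liftT n1) (liftT n2) (liftT n3) Xd Xk1 Xk3)
     & in_ideal G (s3 (liftT P0) (liftT P1) (liftT P2)
                      (liftT n1) (liftT n2) (liftT n3) Xd Xk1 Xk2)])
  /\
  (* consequence: at any common zero, s1 = s2 = s3 = 0 at (d,k,t) *)
  (forall (d k1 k2 k3 l r t1 t2 x1 x2 x3 : algC),
     let p0 := evT P0 t1 t2 in let p1 := evT P1 t1 t2 in
     let p2 := evT P2 t1 t2 in let p3 := evT P3 t1 t2 in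
     let m1 := evT n1 t1 t2 in let m2 := evT n2 t1 t2 in
     let m3 := evT n3 t1 t2 in let bt := evT beta t1 t2 in
     all (fun g => g == 0)
       (gensI2 p0 p1 p2 p3 m1 m2 m3 bt d k1 k2 k3 l r x1 x2 x3) ->
     [/\ s1 p0 p2 p3 m1 m2 m3 d k2 k3 = 0,
         s2 p0 p1 p3 m1 m2 m3 d k1 k3 = 0
       & s3 p0 p1 p2 m1 m2 m3 d k1 k2 = 0]).
Proof.
(* The memberships are polynomial identities over any commutative ring. *)
split.
  by split; [exact: s0_in_I2 | exact: s1_in_I2 | exact: s2_in_I2
            | exact: s3_in_I2].
move=> d k1 k2 k3 l r t1 t2 x1 x2 x3 p0 p1 p2 p3 m1 m2 m3 bt gens0.
by split; apply: (in_ideal_common_zero _ gens0);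
  [exact: s1_in_I2 | exact: s2_in_I2 | exact: s3_in_I2].
Qed.
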